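(* Let $\mathbb{U}$ be a finite-dimensional real vector space, let $T_n=[t_n,t_{n+1}]$ with $\Delta t_n=t_{n+1}-t_n>0$, and let $S\ge 1$. Let $M:\mathbb{U}\times\mathbb{U}\times\mathbb{U}\to\mathbb{R}$ be linear in its second and third arguments, and let $P\ge1$. For $p=1,\dots,P$ let $Q_p:\mathbb{U}\to\mathbb{R}$ be continuously Fréchet-differentiable with derivative $Q_p'(u;v)$ (linear in $v$). Let $\tilde F:\mathbb{U}\times\mathbb{U}^P\times\mathbb{U}\to\mathbb{R}$ be linear in its last argument. Let $\mathcal{I}_n$ be a linear functional on a space of real-valued functions on $T_n$ (containing all integrands below) which is sign-preserving ($\phi\ge0\Rightarrow\mathcal{I}_n[\phi]\ge0$) and satisfies $\mathcal{I}_n[1]=\Delta t_n$. Let $\mathbb{X}_n=\{u\in\mathbb{P}_S(T_n;\mathbb{U}): u(t_n)=u_0\}$ for a given $u_0\in\mathbb{U}$, and $\dot{\mathbb{X}}_n=\mathbb{P}_{S-1}(T_n;\mathbb{U})$. Suppose $(u,(\tilde w_p)_{p=1}^P)\in\mathbb{X}_n\times\dot{\mathbb{X}}_n^P$ satisfies $$\mathcal{I}_n[M(u;\dot u,v)]=\mathcal{I}_n[\tilde F(u,(\tilde w_p);v)]\quad\text{for all } v\in\dot{\mathbb{X}}_n,$$ $$\mathcal{I}_n[M(u;v_p,\tilde w_p)]=\int_{T_n}Q_p'(u;v_p)\,dt\quad\text{for all } v_p\in\dot{\mathbb{X}}_n,\ p=1,\dots,P,$$ where all functions of $t$ are evaluated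 pointwise in time. Fix $q\in\{1,\dots,P\}$. Then: (i) if $\tilde F(a,(b_p);b_q)=0$ for all $a\in\mathbb{U}$, $(b_p)\in\mathbb{U}^P$, then $Q_q(u(t_{n+1}))=Q_q(u(t_n))$; (ii) if $\tilde F(a,(b_p);b_q)\ge0$ for all such arguments, then $Q_q(u(t_{n+1}))\ge Q_q(u(t_n))$; (iii) if $\tilde F(a,(b_p);b_q)\le0$ for all such arguments, then $Q_q(u(t_{n+1}))\le Q_q(u(t_n))$. In all cases $Q_q(u(t_{n+1}))-Q_q(u(t_n))=\mathcal{I}_n[\tilde F(u,(\tilde w_p);\tilde w_q)]$.
   Context: $\mathbb{P}_k(T_n;\mathbb{U})$ denotes polynomials of degree at most $k$ in $t\in T_n$ with coefficients in $\mathbb{U}$; $\dot u$ is the time derivative of $u$, which lies in $\dot{\mathbb{X}}_n$. *)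

From HB Require Import structures.
From mathcomp Require Import all_boot all_order all_algebra.
From mathcomp Require Import all_classical all_reals all_analysis.
Set Implicit Arguments. Unset Strict Implicit. Unset Printing Implicit Defensive.
Import Order.TTheory GRing.Theory Num.Theory.
Import numFieldNormedType.Exports.
Local Open Scope ring_scope.

(* The finite-dimensional real vector space U is modelled as 'rV[R]_d.
   A U-valued polynomial in t is a row vector of real polynomials
   (component j is the j-th coordinate). *)
Definition upoly (R : realType) (d : nat) := 'rV[{poly R}]_d.

Definition in_Pk (R : realType) (d k : nat) (p : upoly R d) : Prop :=
  forall j : 'I_d, (size (p ord0 j) <= k.+1)%N.

Definition ueval (R : realType) (d : nat) (p : upoly R d) (t : R) : 'rV[R]_d :=
  \row_j (p ord0 j).[t].

Definition uderiv (R : realType) (d : nat) (p : upoly R d) : upoly R d :=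
  \row_j (p ord0 j)^`().

From HB Require Import structures.
From mathcomp Require Import all_boot all_order all_algebra.
From mathcomp Require Import all_classical all_reals all_analysis.
Set Implicit Arguments. Unset Strict Implicit. Unset Printing Implicit Defensive.
Import Order.TTheory GRing.Theory Num.Theory.
Import numFieldNormedType.Exports.
Local Open Scope classical_set_scope.
Local Open Scope ring_scope.

(* Testing the first discrete equation with v = w_q and the second with
   v_q = u' (admissible since u' has degree S - 1) gives
   I[F(u, w; w_q)] = I[M(u; u', w_q)] = \int_{T_n} Q_q'(u; u') dt, and by the
   chain rule and the fundamental theorem of calculus the last integral is
   Q_q(u(t_{n+1})) - Q_q(u(t_n)).  The three sign statements then follow from
   positivity of I. *)

Lemma size_deriv_le (R : idomainType) (p : {poly R}) :
  (size p^`() <= (size p).-1)%N.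
Proof.
have [->|p_neq0] := eqVneq p 0; first by rewrite deriv0 size_poly0.
by have := lt_size_deriv p_neq0; case: (size p).
Qed.

Section PolynomialPaths.
Variables (R : realType) (d : nat).
Implicit Types (u : upoly R d) (Q : 'rV[R]_d -> R).

Lemma in_Pk_uderiv k u : in_Pk k u -> in_Pk k.-1 (uderiv u).
Proof.
move=> u_Pk j; rewrite mxE (leq_trans (size_deriv_le (u ord0 j))) //.
move: (u_Pk j); case: (size _) => //= n; rewrite ltnS => /leq_trans; apply.
exact: leqSpred.
Qed.

Lemma derivable_ueval u t : derivable (ueval u) t 1.
Proof.
apply/derivable_mxP => i j; rewrite /ueval; under eq_fun do rewrite mxE.
exact: derivable_horner.
Qed.

Lemma differentiable_ueval u t : differentiable (ueval u) t.
Proof. exact/derivable1_diffP/derivable_ueval. Qed.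

Lemma derive_ueval u t : 'D_1 (ueval u) t = ueval (uderiv u) t.
Proof.
rewrite derive_mx; last exact: derivable_ueval.
apply/matrixP => i j; rewrite !mxE.
have -> : (fun s => ueval u s i j) = horner (u ord0 j).
  by apply/funext => s; rewrite mxE.
by rewrite -derive1E -derivE.
Qed.

Lemma continuous_ueval u : continuous (ueval u).
Proof. by move=> t; apply/differentiable_continuous/differentiable_ueval. Qed.

(* Only the directional derivatives are assumed continuous; joint continuity
   along a path follows by expanding the direction in the canonical basis. *)
Lemma continuous_diff_path Q (a v : R -> 'rV[R]_d) :
  (forall e, continuous (fun x => 'd Q x e)) -> continuous a -> continuous v ->
  continuous (fun t => 'd Q (a t) (v t)).
Proof.
move=> dQ_cont a_cont v_cont.
have -> : (fun t => 'd Q (a t) (v t)) =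
          (fun t => \sum_(j < d) v t ord0 j * 'd Q (a t) 'e_j).
  apply/funext => t; rewrite {1}(row_sum_delta (v t)) linear_sum.
  by apply: eq_bigr => j _; rewrite linearZ.
apply: continuous_big; first exact: add_continuous.
move=> j _ t.
apply: (@continuousM _ _ (fun x => v x ord0 j) (fun x => 'd Q (a x) 'e_j)).
- exact: (continuous_comp (v_cont t) (@coord_continuous R 1 d ord0 j (v t))).
- exact: (continuous_comp (a_cont t) (dQ_cont 'e_j (a t))).
Qed.

Lemma derive_comp_ueval Q u t : differentiable Q (ueval u t) ->
  'D_1 (Q \o ueval u) t = 'd Q (ueval u t) (ueval (uderiv u) t).
Proof.
move=> Q_diff; have u_diff := differentiable_ueval u t.
rewrite deriveE; last exact: differentiable_comp.
by rewrite diff_comp //= -(deriveE (1 : R) u_diff) derive_ueval.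
Qed.

Lemma integral_diff_ueval Q u t0 t1 : t0 < t1 ->
  (forall a, differentiable Q a) -> (forall e, continuous (fun a => 'd Q a e)) ->
  \int[lebesgue_measure]_(t in `[t0, t1]) 'd Q (ueval u t) (ueval (uderiv u) t)
  = Q (ueval u t1) - Q (ueval u t0).
Proof.
move=> t01 Q_diff dQ_cont.
have Qu_diff t : differentiable (Q \o ueval u) t.
  exact: differentiable_comp (differentiable_ueval u t) (Q_diff _).
have Qu_cont : continuous (Q \o ueval u).
  by move=> t; apply: differentiable_continuous.
rewrite /Rintegral (@continuous_FTC2 _ _ (Q \o ueval u)) //.
- apply: continuous_subspaceT; apply: continuous_diff_path => //;
  exact: continuous_ueval.
- split.
  + by move=> t _; apply/derivable1_diffP.
  + exact: cvg_at_right_filter (Qu_cont t0).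
  + exact: cvg_at_left_filter (Qu_cont t1).
- by move=> t _; rewrite derive1E derive_comp_ueval.
Qed.

End PolynomialPaths.

Section PositiveFunctional.
Variables (R : realType) (t0 t1 : R) (Dom : set (R -> R)) (I : (R -> R) -> R).
Hypothesis Dom0 : Dom (fun _ => 0).
Hypothesis Dom_lin :
  forall (k : R) f g, Dom f -> Dom g -> Dom (fun t => k * f t + g t).
Hypothesis I_lin : forall (k : R) f g, Dom f -> Dom g ->
  I (fun t => k * f t + g t) = k * I f + I g.
Hypothesis I_ge0 :
  forall f, Dom f -> (forall t, t0 <= t <= t1 -> 0 <= f t) -> 0 <= I f.

Lemma functional0 : I (fun _ => 0) = 0.
Proof.
have I0 : I (fun _ => 0) = I (fun _ => 0) + I (fun _ => 0).
  rewrite -[X in X + _]mul1r -I_lin //.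
  by congr I; apply/funext => t; rewrite mul1r addr0.
by apply: (addrI (I (fun _ => 0))); rewrite addr0 -I0.
Qed.

Lemma functional_le0 f :
  Dom f -> (forall t, t0 <= t <= t1 -> f t <= 0) -> I f <= 0.
Proof.
move=> Df f_le0.
have -> : I f = - I (fun t => -1 * f t + 0).
  by rewrite I_lin // functional0 addr0 mulN1r opprK.
rewrite oppr_le0; apply: I_ge0 => [|t t01]; first exact: Dom_lin.
by rewrite mulN1r addr0 oppr_ge0 f_le0.
Qed.

End PositiveFunctional.

Theorem theorem2p1 (R : realType) (d : nat) (t0 t1 : R) (S P : nat)
  (M : 'rV[R]_d -> 'rV[R]_d -> 'rV[R]_d -> R)
  (Q : 'I_P -> 'rV[R]_d -> R)
  (F : 'rV[R]_d -> ('I_P -> 'rV[R]_d) -> 'rV[R]_d -> R)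
  (Dom : set (R -> R)) (I : (R -> R) -> R)
  (u0 : 'rV[R]_d) (u : upoly R d) (w : 'I_P -> upoly R d) (q : 'I_P) :
  t0 < t1 ->
  (1 <= S)%N ->
  (1 <= P)%N ->
  (* M is linear in its second and third arguments *)
  (forall a b c1 c2 (k : R), M a (k *: c1 + c2) b = k * M a c1 b + M a c2 b) ->
  (forall a b c1 c2 (k : R), M a b (k *: c1 + c2) = k * M a b c1 + M a b c2) ->
  (* each Q_p is continuously Frechet differentiable *)
  (forall p a, differentiable (Q p) a) ->
  (forall p v, continuous (fun a => 'd (Q p) a v)) ->
  (* F~ is linear in its last argument *)
  (forall a b c1 c2 (k : R), F a b (k *: c1 + c2) = k * F a b c1 + F a b c2) ->
  (* I_n : a linear, sign-preserving functional on a space Dom of functions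
     on T_n, with I_n[1] = t1 - t0 *)
  Dom (fun _ => 0) ->
  (forall (k : R) f g, Dom f -> Dom g -> Dom (fun t => k * f t + g t)) ->
  (forall (k : R) f g, Dom f -> Dom g ->
     I (fun t => k * f t + g t) = k * I f + I g) ->
  (forall f, Dom f -> (forall t, t0 <= t <= t1 -> 0 <= f t) -> 0 <= I f) ->
  Dom (fun _ => 1) ->
  I (fun _ => 1) = t1 - t0 ->
  (* Dom contains all integrands *)
  (forall v, in_Pk S.-1 v ->
     Dom (fun t => M (ueval u t) (ueval (uderiv u) t) (ueval v t))) ->
  (forall v, in_Pk S.-1 v ->
     Dom (fun t => F (ueval u t) (fun p => ueval (w p) t) (ueval v t))) ->
  (forall p v, in_Pk S.-1 v ->
     Dom (fun t => M (ueval u t) (ueval v t) (ueval (w p) t))) ->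
  (* (u, (w_p)) in X_n x Xdot_n^P *)
  in_Pk S u -> ueval u t0 = u0 ->
  (forall p, in_Pk S.-1 (w p)) ->
  (* the discrete equations *)
  (forall v, in_Pk S.-1 v ->
     I (fun t => M (ueval u t) (ueval (uderiv u) t) (ueval v t)) =
     I (fun t => F (ueval u t) (fun p => ueval (w p) t) (ueval v t))) ->
  (forall p v, in_Pk S.-1 v ->
     I (fun t => M (ueval u t) (ueval v t) (ueval (w p) t)) =
     \int[lebesgue_measure]_(t in `[t0, t1]) 'd (Q p) (ueval u t) (ueval v t)) ->
  [/\ ((forall a b, F a b (b q) = 0) ->
          Q q (ueval u t1) = Q q (ueval u t0)),
      ((forall a b, 0 <= F a b (b q)) ->
          Q q (ueval u t0) <= Q q (ueval u t1)),
      ((forall a b, F a b (b q) <= 0) ->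
          Q q (ueval u t1) <= Q q (ueval u t0)) &
      Q q (ueval u t1) - Q q (ueval u t0) =
        I (fun t => F (ueval u t) (fun p => ueval (w p) t) (ueval (w q) t))].
Proof.
move=> t01 _ _ _ _ Q_diff dQ_cont _ Dom0 Dom_lin I_lin I_ge0 _ _ _ DomF _
  u_PS _ w_PS eq_dynamics eq_aux.
set f := fun t => F (ueval u t) (fun p => ueval (w p) t) (ueval (w q) t).
have energy : Q q (ueval u t1) - Q q (ueval u t0) = I f.
  rewrite -(integral_diff_ueval _ t01 (Q_diff q) (dQ_cont q)).
  rewrite -eq_aux; last exact: in_Pk_uderiv.
  exact: eq_dynamics (w_PS q).
have Df : Dom f := DomF _ (w_PS q).
split=> [F_eq0|F_ge0|F_le0|//].
- apply/eqP; rewrite -subr_eq0 energy -(functional0 Dom0 I_lin).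
  by apply/eqP; congr I; apply/funext => t; rewrite /f F_eq0.
- rewrite -subr_ge0 energy; apply: I_ge0 Df _ => t _.
  exact: F_ge0.
- rewrite -subr_le0 energy.
  apply: (functional_le0 Dom0 Dom_lin I_lin I_ge0 Df) => t _.
  exact: F_le0.
Qed.
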